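(* For $r\in\mathbb{N}_0$ and $n\ge1$, the expected size $E^L_{n;r}$ of the $r$th fringe of a simple two-dimensional lattice path chosen uniformly at random among the $4^n$ paths of length $n$ is \[ E^L_{n;r}=4^{r+1-n}\sum_{\lambda\ge1}\frac{2\lambda^3+\lambda}{3}\bigg[\binom{2n-1}{n-2^r\lambda}-\binom{2n-1}{n-2^r\lambda-1}\bigg], \] where binomial coefficients with negative lower index are $0$.
   Context: A simple two-dimensional lattice path is a finite nonempty word over the steps $\{\uparrow,\rightarrow,\downarrow,\leftarrow\}$; its length $|\ell|$ is the number of steps. The reduction $\Phi_L(\ell)$ of a path $\ell$ of length $\ge2$: first, if the first step of $\ell$ is vertical, the entire path is rotated by $90^\circ$ clockwise; then, if the last step is horizontal, this last step alone is rotated by $90^\circ$ clockwise. The resulting path decomposes uniquely as $H_1V_1\cdots H_kV_k$ ($k\ge1$) with each $H_i$ a nonempty maximal run of horizontal steps and each $V_i$ a nonempty maximal run of vertical steps. Each block $H_iV_i$ is replaced by $\nearrow$, $\searrow$, $\swarrow$, $\nwarrow$ according as ($H_i$ starts with $\rightarrow$, $V_i$ with $\uparrow$), ($\rightarrow$, $\downarrow$), ($\leftarrow$, $\downarrow$), ($\leftarrow$, $\uparrow$); the diagonal path is then rotated by $45^\circ$ clockwise, giving $\Phi_L(\ell)$ of length $k$. The compactification degree $\mathrm{cdeg}(\ell)$ is the number $m\ge0$ such that $\Phi_L^m(\ell)$ is a single step. The size of the $r$th fringe of $\ell$ is $|\Phi_L^r(\ell)|$ if $\mathrm{cdeg}(\ell)\ge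 r$, and $0$ otherwise. *)

From HB Require Import structures.
From mathcomp Require Import all_boot all_order all_algebra.
Set Implicit Arguments. Unset Strict Implicit. Unset Printing Implicit Defensive.
Import Order.TTheory GRing.Theory Num.Theory.

Inductive step := Up | Right | Down | Left.

Definition step_to_ord (d : step) : 'I_4 :=
  match d with
  | Up => @Ordinal 4 0 isT | Right => @Ordinal 4 1 isT
  | Down => @Ordinal 4 2 isT | Left => @Ordinal 4 3 isT
  end.
Definition ord_to_step (i : 'I_4) : step :=
  match val i with 0 => Up | 1 => Right | 2 => Down | _ => Left end.
Lemma step_K : cancel step_to_ord ord_to_step.
Proof. by case. Qed.

HB.instance Definition _ := Finite.copy step (can_type step_K).

Definition path := seq step.

Definition vert (d : step) : bool := (d == Up) || (d == Down).

Definition rot (d : step) : step :=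
  match d with Up => Right | Right => Down | Down => Left | Left => Up end.

Definition norm_first (s : path) : path :=
  if s is x :: _ then (if vert x then map rot s else s) else s.

Definition norm_last (s : path) : path :=
  if s is x :: s' then
    (if vert (last x s') then s else rcons (belast x s') (rot (last x s')))
  else s.

Fixpoint runs (s : path) : seq path :=
  match s with
  | [::] => [::]
  | x :: s' =>
      match runs s' with
      | (y :: r) :: rs =>
          if vert x == vert y then (x :: y :: r) :: rs
          else [:: x] :: (y :: r) :: rs
      | _ => [:: [:: x]]
      end
  end.

(* block H V  ->  diagonal step, then rotated by 45 degrees clockwise:
   (->,up) NE -> Right, (->,down) SE -> Down, (<-,down) SW -> Left,
   (<-,up) NW -> Up *)
Definition diag (h v : step) : step :=
  match h, v with
  | Right, Up => Right
  | Right, Down => Down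
  | Left, Down => Left
  | Left, Up => Up
  | _, _ => Right (* does not occur *)
  end.

Fixpoint blocks (rs : seq path) : path :=
  match rs with
  | h :: v :: rs' => diag (head Right h) (head Up v) :: blocks rs'
  | _ => [::]
  end.

(* The reduction Phi_L (meaningful for paths of length >= 2). *)
Definition phiL (s : path) : path := blocks (runs (norm_last (norm_first s))).

(* compactification degree: the number m of reductions after which
   a single step remains (computed with sufficient fuel, since the
   length strictly decreases under phiL). *)
Fixpoint cdeg_aux (fuel : nat) (s : path) : nat :=
  match fuel with
  | 0 => 0
  | f.+1 => if size s <= 1 then 0 else (cdeg_aux f (phiL s)).+1
  end.
Definition cdeg (s : path) : nat := cdeg_aux (size s) s.

Definition fringe_size (r : nat) (s : path) : nat :=
  if r <= cdeg s then size (iter r phiL s) else 0.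

Local Open Scope ring_scope.

Definition expected_fringe (n r : nat) : rat :=
  (\sum_(t : n.-tuple step) (fringe_size r t)%:R) / (4 ^ n)%:R.

Definition binz (m : nat) (k : int) : rat :=
  if k < 0 then 0 else ('C(m, `|k|%N))%:R.

From Pilot Require Import Defs.
From mathcomp Require Import all_boot all_order all_algebra.
From mathcomp Require Import zify ring.
Import Order.TTheory GRing.Theory Num.Theory.
Local Open Scope ring_scope.

(* After the normalisations, [phiL] maps the 4^n paths of length n
   four-to-one onto the words that start with a horizontal and end with a
   vertical step.  Cutting such a word of length m+1 after its first step
   and sorting by the shape of the remainder gives a linear recursion
   showing that, as a multiset, the reductions of these words cover every
   word of length k exactly [alpha m k] times.  Hence the total size
   E_r(n) of the r-th fringes satisfies E_(r+1)(n) = 4 sum_k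
   alpha_(n-1)(k) E_r(k), with E_0(n) = n 4^n.
   The differences d_n(i) of binomials in the statement satisfy
   d_(n+1)(i) = d_n(i-1) + 2 d_n(i) + d_n(i+1), and the same recursion
   yields sum_k alpha_m(k) d_k(j) = d_(m+1)(2j): one reduction doubles the
   scale, whence the 2^r.  The case r = 0 reduces to the moment identities
   sum_l l d_n(l) = 4^(n-1) and sum_l (2l^3+l)/3 d_n(l) = n 4^(n-1). *)

Definition blockw (s : seq step) : seq step := blocks (runs s).
Definition blockw_tail (s : seq step) : seq step := blocks (behead (runs s)).

Lemma runs_cons x s : runs (x :: s) =
  match runs s with
  | (y :: r) :: rs =>
      if vert x == vert y then (x :: y :: r) :: rs else [:: x] :: (y :: r) :: rs
  | _ => [:: [:: x]]
  end.
Proof. by []. Qed.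

Lemma runs_consE y t : exists r rs, runs (y :: t) = (y :: r) :: rs /\
  match rs with
  | [::] => vert (last y t) = vert y
  | (z :: _) :: _ => vert z = ~~ vert y
  | [::] :: _ => False
  end.
Proof.
elim: t y => [|y' t IH] y; first by exists [::], [::].
have [r [rs [E H]]] := IH y'.
rewrite runs_cons E; case: eqP => Hv.
- exists (y' :: r), rs; split => //.
  by case: rs E H => [|[|z ?] ?] //= _; rewrite Hv.
- exists [::], ((y' :: r) :: rs); split => //.
  by move: Hv; case: (vert y); case: (vert y').
Qed.

Lemma runs_cons2 x y t : exists r rs, runs (y :: t) = (y :: r) :: rs /\
  runs (x :: y :: t) = if vert x == vert y then (x :: y :: r) :: rs
                       else [:: x] :: (y :: r) :: rs.
Proof.
have [r [rs [E _]]] := runs_consE y t.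
by exists r, rs; split => //; rewrite runs_cons E.
Qed.

Definition hv_word (s : seq step) :=
  if s is y :: t then ~~ vert y && vert (last y t) else false.
Definition vv_word (s : seq step) :=
  if s is y :: t then vert y && vert (last y t) else false.

(* The vertical component of the diagonal step that [diag] rotates to [d]. *)
Definition diag_vert (d : step) : step :=
  match d with Up | Right => Up | _ => Down end.

Lemma blockw_consH_hv x y t : ~~ vert x -> hv_word (y :: t) ->
  blockw (x :: y :: t) =
  diag x (diag_vert (head Right (blockw (y :: t)))) :: behead (blockw (y :: t)).
Proof.
move=> Hx /andP [Hy Hl].
have [r [rs [E H]]] := runs_consE y t.
have [r' [rs' [E' E2]]] := runs_cons2 x y t.
rewrite E in E'; case: E' => ? ?; subst r' rs'.
rewrite /blockw E2 E (negbTE Hx) (negbTE Hy) /=.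
case: rs {E E2} H => [|[|z r2] rs2] H //.
- by move: Hl; rewrite H (negbTE Hy).
- by case: x Hx => //; case: y Hy H {Hl} => //; case: z.
Qed.

Lemma blockw_consH_vv x y t : ~~ vert x -> vv_word (y :: t) ->
  blockw (x :: y :: t) = diag x y :: blockw_tail (y :: t).
Proof.
move=> Hx /andP [Hy _]; have [r [rs [E E2]]] := runs_cons2 x y t.
by rewrite /blockw /blockw_tail E2 E (negbTE Hx) Hy.
Qed.

Lemma blockw_tail_consV_hv x y t : vert x -> hv_word (y :: t) ->
  blockw_tail (x :: y :: t) = blockw (y :: t).
Proof.
move=> Hx /andP [Hy _]; have [r [rs [E E2]]] := runs_cons2 x y t.
by rewrite /blockw /blockw_tail E2 E Hx (negbTE Hy).
Qed.

Lemma blockw_tail_consV_vv x y t : vert x -> vv_word (y :: t) ->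
  blockw_tail (x :: y :: t) = blockw_tail (y :: t).
Proof.
move=> Hx /andP [Hy _]; have [r [rs [E E2]]] := runs_cons2 x y t.
by rewrite /blockw /blockw_tail E2 E Hx Hy.
Qed.

Fixpoint words n : seq (seq step) :=
  if n is m.+1 then [seq x :: s | x <- [:: Up; Right; Down; Left], s <- words m]
  else [:: [::]].

Definition sum_steps (f : step -> rat) := f Up + f Right + f Down + f Left.

Lemma big_words_cons (F : seq step -> rat) n :
  \sum_(s <- words n.+1) F s = \sum_(s <- words n) sum_steps (fun x => F (x :: s)).
Proof. by rewrite /= !big_cat !big_map big_nil /sum_steps !big_split /=; ring. Qed.

Lemma mem_words n s : (s \in words n) = (size s == n).
Proof.
elim: n s => [|n IH] s; first by case: s.
apply/allpairsP/idP.
- by case=> [[x t]] /= [_ Ht ->]; rewrite /= eqSS -IH.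
- case: s => [|x s] //=; rewrite eqSS -IH => Hs.
  by exists (x, s); split => //; case: x.
Qed.

Lemma uniq_words n : uniq (words n).
Proof.
elim: n => [|n IH] //.
change (uniq [seq x :: s | x <- [:: Up; Right; Down; Left], s <- words n]).
apply: allpairs_uniq => //.
by move=> [x s] [y t] _ _ /= [-> ->].
Qed.

Lemma words_neq0 n s : s \in words n.+1 -> s != [::].
Proof. by rewrite mem_words; case: s. Qed.

Lemma big_tuple_words n (F : seq step -> rat) :
  \sum_(t : n.-tuple step) F t = \sum_(s <- words n) F s.
Proof.
rewrite -(big_map (fun t : n.-tuple step => tval t) xpredT F).
apply: perm_big; apply: uniq_perm.
- by rewrite map_inj_uniq ?index_enum_uniq //; apply: val_inj.
- exact: uniq_words.
- move=> s; rewrite mem_words; apply/mapP/idP.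
  + by case=> t _ ->; rewrite size_tuple.
  + by move=> /eqP H; exists (Tuple (introT eqP H)) => //; apply: mem_index_enum.
Qed.

Lemma big_words_const (c : rat) n : \sum_(s <- words n) c = c * 4 ^+ n.
Proof.
elim: n c => [|n IH] c; first by rewrite big_seq1 expr0 mulr1.
rewrite big_words_cons /sum_steps big_split !IH exprS /=; ring.
Qed.

Lemma big_words_rcons n (F : seq step -> rat) :
  \sum_(s <- words n.+1) F s = \sum_(s <- words n) sum_steps (fun x => F (rcons s x)).
Proof.
elim: n F => [|n IH] F; first by rewrite big_words_cons /= !big_seq1.
rewrite big_words_cons (IH (fun s => sum_steps (fun y => F (y :: s)))).
by rewrite [RHS]big_words_cons; apply: eq_bigr => s _; rewrite /sum_steps /=; ring.
Qed.

Lemma big_words_rot n (F : seq step -> rat) :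
  \sum_(s <- words n) F (map Defs.rot s) = \sum_(s <- words n) F s.
Proof.
elim: n F => [|n IH] F; first by rewrite /= !big_seq1.
rewrite !big_words_cons -(IH (fun t => sum_steps (fun x => F (x :: t)))).
by apply: eq_bigr => s _; rewrite /sum_steps /=; ring.
Qed.

Definition wsum k (G : seq step -> rat) := \sum_(w <- words k) G w.
Definition hv_sum n (G : seq step -> rat) :=
  \sum_(s <- words n) (if hv_word s then G (blockw s) else 0).
Definition vv_sum n (H : step -> seq step -> rat) :=
  \sum_(s <- words n) (if vv_word s then H (head Up s) (blockw_tail s) else 0).

(* [hv_sum (m+1)] and [vv_sum (m+1)] decompose into [wsum k] with weights
   [alpha m k] and [beta m k]. *)
Fixpoint hv_vv_coef m : (nat -> rat) * (nat -> rat) :=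
  if m is m'.+1 then
    ((fun k => 2 * (hv_vv_coef m').1 k +
               (if k is k'.+1 then (hv_vv_coef m').2 k' else 0)),
     (fun k => 2 * (hv_vv_coef m').2 k + (hv_vv_coef m').1 k))
  else ((fun _ => 0), (fun k => (k == 0)%:R)).
Definition alpha m k := (hv_vv_coef m).1 k.
Definition beta m k := (hv_vv_coef m).2 k.

Lemma alphaS m k :
  alpha m.+1 k = 2 * alpha m k + (if k is k'.+1 then beta m k' else 0).
Proof. by []. Qed.

Lemma betaS m k : beta m.+1 k = 2 * beta m k + alpha m k.
Proof. by []. Qed.

Lemma alpha0 m : alpha m 0 = 0.
Proof. by elim: m => [|m IH] //; rewrite alphaS IH; ring. Qed.

Lemma alpha_beta_gt m k : (m < k)%N -> alpha m k = 0 /\ beta m k = 0.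
Proof.
elim: m k => [|m IH] [|k] //= Hk.
have [a1 b1] := IH k.+1 (ltnW Hk); have [a2 b2] := IH k Hk.
by rewrite alphaS betaS a1 b1 b2; split; ring.
Qed.

Definition sum_diag_head (G : seq step -> rat) w :=
  G (diag Right (diag_vert (head Right w)) :: behead w) +
  G (diag Left (diag_vert (head Right w)) :: behead w).
Definition sum_diag_cons (G : seq step -> rat) y w :=
  G (diag Right y :: w) + G (diag Left y :: w).
Definition sum_updown (H : step -> seq step -> rat) w := H Up w + H Down w.

Lemma sum_steps_hv_cons G s : s != [::] ->
  sum_steps (fun x => if hv_word (x :: s) then G (blockw (x :: s)) else 0) =
  (if hv_word s then sum_diag_head G (blockw s) else 0) +
  (if vv_word s then sum_diag_cons G (head Up s) (blockw_tail s) else 0).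
Proof.
case: s => [|y t] // _; rewrite /sum_steps /=.
case Hl: (vert (last y t)); case Hy: (vert y) => /=; try ring.
- have Hvv : vv_word (y :: t) by rewrite /= Hl Hy.
  by rewrite !blockw_consH_vv // /sum_diag_cons; ring.
- have Hhv : hv_word (y :: t) by rewrite /= Hl Hy.
  by rewrite !blockw_consH_hv // /sum_diag_head; ring.
Qed.

Lemma sum_steps_vv_cons H s : s != [::] ->
  sum_steps (fun x => if vv_word (x :: s)
                      then H (head Up (x :: s)) (blockw_tail (x :: s)) else 0) =
  (if hv_word s then sum_updown H (blockw s) else 0) +
  (if vv_word s then sum_updown H (blockw_tail s) else 0).
Proof.
case: s => [|y t] // _; rewrite /sum_steps /=.
case Hl: (vert (last y t)); case Hy: (vert y) => /=; try ring.
- have Hvv : vv_word (y :: t) by rewrite /= Hl Hy.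
  by rewrite !blockw_tail_consV_vv // /sum_updown; ring.
- have Hhv : hv_word (y :: t) by rewrite /= Hl Hy.
  by rewrite !blockw_tail_consV_hv // /sum_updown; ring.
Qed.

Lemma hv_sumSS n G :
  hv_sum n.+2 G = hv_sum n.+1 (sum_diag_head G) + vv_sum n.+1 (sum_diag_cons G).
Proof.
rewrite /hv_sum /vv_sum big_words_cons -big_split /=.
by apply: eq_big_seq => s /words_neq0; apply: sum_steps_hv_cons.
Qed.

Lemma vv_sumSS n H :
  vv_sum n.+2 H = hv_sum n.+1 (sum_updown H) + vv_sum n.+1 (fun _ => sum_updown H).
Proof.
rewrite /hv_sum /vv_sum big_words_cons -big_split /=.
by apply: eq_big_seq => s /words_neq0; apply: sum_steps_vv_cons.
Qed.

Lemma wsum_diag_head k G : wsum k.+1 (sum_diag_head G) = 2 * wsum k.+1 G.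
Proof.
rewrite /wsum !big_words_cons mulr_sumr; apply: eq_bigr => s _.
by rewrite /sum_steps /sum_diag_head /=; ring.
Qed.

Lemma wsum_diag_cons k G :
  wsum k (sum_diag_cons G Up) + wsum k (sum_diag_cons G Down) = wsum k.+1 G.
Proof.
rewrite /wsum big_words_cons -big_split; apply: eq_bigr => s _.
by rewrite /sum_steps /sum_diag_cons /=; ring.
Qed.

Lemma wsum_updown k H : wsum k (sum_updown H) = wsum k (H Up) + wsum k (H Down).
Proof. by rewrite /wsum -big_split. Qed.

Lemma hv_vv_sum_coef m N : (m < N)%N ->
  (forall G, hv_sum m.+1 G = \sum_(0 <= k < N) alpha m k * wsum k G) /\
  (forall H, vv_sum m.+1 H =
             \sum_(0 <= k < N) beta m k * (wsum k (H Up) + wsum k (H Down))).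
Proof.
elim: m N => [|m IH] [|N] // HN.
- split => [G|H].
  + rewrite /hv_sum big_words_cons big_seq1 /sum_steps /= big1 // => k _.
    by rewrite /alpha /=; ring.
  + rewrite /vv_sum big_words_cons big_seq1 /sum_steps /= big_nat_recl // big1 /=.
    * by rewrite /beta /wsum /= !big_seq1; ring.
    * by move=> k _; rewrite /beta /=; ring.
- have [IHhv IHvv] := IH N.+1 (ltnW HN); have [_ IHvv'] := IH N HN.
  split => [G|H].
  + rewrite hv_sumSS IHhv IHvv' [in RHS]big_nat_recl // big_nat_recl //.
    rewrite alphaS !alpha0.
    under eq_bigr => k _ do rewrite wsum_diag_head.
    under [in RHS]eq_bigr => k _ do rewrite alphaS mulrDl.
    rewrite big_split /=.
    under [X in _ = _ + (_ + X)]eq_bigr => k _ do rewrite -wsum_diag_cons.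
    have -> : \sum_(0 <= k < N) alpha m k.+1 * (2 * wsum k.+1 G) =
              \sum_(0 <= k < N) 2 * alpha m k.+1 * wsum k.+1 G.
      by apply: eq_bigr => k _; ring.
    ring.
  + rewrite vv_sumSS IHhv IHvv -big_split /=; apply: eq_bigr => k _.
    by rewrite betaS wsum_updown /sum_updown; ring.
Qed.

Lemma big_words_norm_first n (F : seq step -> rat) :
  \sum_(s <- words n.+1) F (norm_first s) =
  2 * \sum_(s <- words n) (F (Right :: s) + F (Left :: s)).
Proof.
pose K t := F (Right :: t) + F (Left :: t).
rewrite big_words_cons.
transitivity (\sum_(s <- words n) (K (map Defs.rot s) + K s)).
  by apply: eq_bigr => s _; rewrite /sum_steps /K /=; ring.
by rewrite big_split /= (big_words_rot n K) /K; ring.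
Qed.

Lemma norm_last_rcons y t x :
  norm_last (y :: rcons t x) = y :: rcons t (if vert x then x else Defs.rot x).
Proof. by rewrite /norm_last last_rcons belast_rcons; case: (vert x). Qed.

Lemma hv_word_rcons y t x : hv_word (y :: rcons t x) = ~~ vert y && vert x.
Proof. by rewrite /= last_rcons. Qed.

Lemma big_words_phiL n (G : seq step -> rat) :
  \sum_(s <- words n.+2) G (phiL s) = 4 * hv_sum n.+2 G.
Proof.
rewrite /phiL (big_words_norm_first n.+1 (fun u => G (blockw (norm_last u)))).
rewrite /hv_sum [in RHS]big_words_cons !big_words_rcons !mulr_sumr.
apply: eq_bigr => t _.
by rewrite /sum_steps -!rcons_cons !norm_last_rcons !hv_word_rcons /=; ring.
Qed.

Lemma size_norm_first s : size (norm_first s) = size s.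
Proof. by case: s => [|x s] //=; case: (vert x) => //=; rewrite size_map. Qed.

Lemma size_norm_last s : size (norm_last s) = size s.
Proof. by case: s => [|x s] //=; case: ifP => // _; rewrite size_rcons size_belast. Qed.

Lemma size_runs s : (size (runs s) <= size s)%N.
Proof.
elim: s => [|x s IH] //; rewrite runs_cons.
by case: (runs s) IH => [|[|y r] rs] //= IH; case: ifP => //= _; lia.
Qed.

Lemma size_blocks rs : (2 * size (blocks rs) <= size rs)%N.
Proof.
elim: {rs}(size rs) {-2}rs (leqnn (size rs)) => [|m IH] [|a [|b rs]] //= H.
by have := IH rs; lia.
Qed.

Lemma size_phiL s : (0 < size s)%N -> (size (phiL s) < size s)%N.
Proof.
have := size_blocks (runs (norm_last (norm_first s))).
have := size_runs (norm_last (norm_first s)).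
by rewrite size_norm_last size_norm_first /phiL; lia.
Qed.

Lemma cdeg_aux_fuel f g s :
  (size s <= f)%N -> (size s <= g)%N -> cdeg_aux f s = cdeg_aux g s.
Proof.
elim: f g s => [|f IH] [|g] s //=.
- by rewrite leqn0 => /eqP ->.
- by move=> _; rewrite leqn0 => /eqP ->.
- move=> Hf Hg; case: leqP => // Hs.
  have Hp := size_phiL _ (ltnW Hs); congr _.+1; apply: IH; lia.
Qed.

Lemma cdeg_phiL s : (1 < size s)%N -> cdeg s = (cdeg (phiL s)).+1.
Proof.
move=> H; rewrite /cdeg; case E: (size s) H => [|p] // H.
rewrite /= E ifF; last by case: p {E} H.
by congr _.+1; apply: cdeg_aux_fuel => //; have := size_phiL s; rewrite E; lia.
Qed.

Lemma fringe_sizeS_phiL r s :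
  (1 < size s)%N -> fringe_size r.+1 s = fringe_size r (phiL s).
Proof. by move=> H; rewrite /fringe_size (cdeg_phiL _ H) ltnS iterSr. Qed.

Lemma fringe_sizeS_small r s : (size s <= 1)%N -> fringe_size r.+1 s = 0%N.
Proof. by rewrite /fringe_size /cdeg; case E: (size s) => [|[|p]] //= _; rewrite E. Qed.

Definition fringe_total r n := \sum_(s <- words n) (fringe_size r s)%:R : rat.

Lemma fringe_total0 n : fringe_total 0 n = n%:R * 4 ^+ n.
Proof.
rewrite /fringe_total -big_words_const; apply: eq_big_seq => s.
by rewrite mem_words /fringe_size /= => /eqP ->.
Qed.

Lemma fringe_totalS_small r n : (n <= 1)%N -> fringe_total r.+1 n = 0.
Proof.
move=> Hn; rewrite /fringe_total big_seq big1 // => s.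
by rewrite mem_words => /eqP Hs; rewrite fringe_sizeS_small // Hs.
Qed.

Lemma fringe_totalSS r n :
  fringe_total r.+1 n.+2 = 4 * \sum_(0 <= k < n.+2) alpha n.+1 k * fringe_total r k.
Proof.
rewrite /fringe_total.
transitivity (\sum_(s <- words n.+2) (fringe_size r (phiL s))%:R : rat).
  by apply: eq_big_seq => s; rewrite mem_words => /eqP Hs; rewrite fringe_sizeS_phiL // Hs.
rewrite (big_words_phiL n (fun w => (fringe_size r w)%:R)); congr (_ * _).
by have [-> _] := hv_vv_sum_coef _ _ (ltnSn n.+1).
Qed.

Definition dbin (n : nat) (i : int) : rat :=
  binz (2 * n - 1) (n%:Z - i) - binz (2 * n - 1) (n%:Z - i - 1).

Lemma binz_lt0 m t : t < 0 -> binz m t = 0.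
Proof. by rewrite /binz => ->. Qed.

Lemma binzS m t : binz m.+1 t = binz m t + binz m (t - 1).
Proof.
case: t => [[|k]|k].
- by rewrite (@binz_lt0 m (0 - 1)) // /binz /= !bin0 addr0.
- have -> : k.+1%:Z - 1 = k%:Z by lia.
  by rewrite /binz /= binS natrD addrC.
- by rewrite NegzE !binz_lt0 //; lia.
Qed.

Lemma binzSS m t : binz m.+2 t = binz m t + 2 * binz m (t - 1) + binz m (t - 2).
Proof. by rewrite !binzS (_ : t - 1 - 1 = t - 2); [ring | lia]. Qed.

Lemma binz1 t : binz 1 t = (t == 0)%:R + (t == 1)%:R.
Proof. by case: t => [[|[|k]]|k]. Qed.

Lemma dbinS k i : (0 < k)%N ->
  dbin k.+1 i = dbin k (i - 1) + 2 * dbin k i + dbin k (i + 1).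
Proof.
case: k => [|k] // _; rewrite /dbin.
have -> : (2 * k.+2 - 1 = (2 * k.+1 - 1).+2)%N by lia.
rewrite !binzSS.
have -> : k.+1%:Z - (i - 1) = k.+2%:Z - i by lia.
have -> : k.+1%:Z - i = k.+2%:Z - i - 1 by lia.
have -> : k.+1%:Z - (i + 1) = k.+2%:Z - i - 2 by lia.
have -> : k.+2%:Z - i - 1 - 2 = k.+2%:Z - i - 2 - 1 by lia.
have -> : k.+2%:Z - i - 1 - 1 = k.+2%:Z - i - 2 by lia.
ring.
Qed.

Lemma dbin1 i : dbin 1 i = (i == 1)%:R - (i == -1)%:R.
Proof.
rewrite /dbin /= !binz1.
have -> : (1 - i == 0) = (i == 1) by apply/eqP/eqP; lia.
have -> : (1 - i == 1) = (i == 0) by apply/eqP/eqP; lia.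
have -> : (1 - i - 1 == 0) = (i == 0) by apply/eqP/eqP; lia.
have -> : (1 - i - 1 == 1) = (i == -1) by apply/eqP/eqP; lia.
ring.
Qed.

Lemma dbin_gt n i : n%:Z < i -> dbin n i = 0.
Proof. by move=> H; rewrite /dbin !binz_lt0; [ring | lia | lia]. Qed.

Lemma dbin0 n : (0 < n)%N -> dbin n 0 = 0.
Proof.
case: n => [|n] // _; rewrite /dbin subr0.
have -> : n.+1%:Z - 1 = n%:Z by lia.
rewrite /binz /=.
have -> : (2 * n.+1 - 1 = n + n.+1)%N by lia.
by rewrite -[X in 'C(_, X)](addKn n n.+1) bin_sub ?leq_addr // subrr.
Qed.

Lemma alpha_beta_dbin m : forall j : int,
  \sum_(0 <= k < m.+1) alpha m k * dbin k j = dbin m.+1 (2 * j) /\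
  \sum_(0 <= k < m.+1) beta m k * dbin k.+1 j =
    dbin m.+2 (2 * j) - 2 * dbin m.+1 (2 * j).
Proof.
elim: m => [|m IH] j.
- rewrite !big_nat1 alpha0 (dbinS 1) // !dbin1.
  have -> : (2 * j == 1) = false by apply/eqP; lia.
  have -> : (2 * j == -1) = false by apply/eqP; lia.
  have -> : (2 * j - 1 == 1) = (j == 1) by apply/eqP/eqP; lia.
  have -> : (2 * j - 1 == -1) = (j == 0) by apply/eqP/eqP; lia.
  have -> : (2 * j + 1 == 1) = (j == 0) by apply/eqP/eqP; lia.
  have -> : (2 * j + 1 == -1) = (j == -1) by apply/eqP/eqP; lia.
  by split; rewrite /beta /=; ring.
- have [alpha_top beta_top] := alpha_beta_gt _ _ (ltnSn m).
  have [IHalpha IHbeta] := IH j.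
  split.
  + rewrite big_nat_recl // alphaS alpha0.
    under eq_bigr => i _ do rewrite alphaS /= mulrDl -mulrA.
    rewrite big_split /= IHbeta -mulr_sumr big_nat_recr //= alpha_top.
    by move: IHalpha; rewrite big_nat_recl // alpha0 => <-; ring.
  + under eq_bigr => i _ do rewrite betaS mulrDl -mulrA.
    rewrite big_split /= -mulr_sumr.
    rewrite (big_nat_recr m.+1 0 (fun i => beta m i * dbin i.+1 j)) //= beta_top IHbeta.
    rewrite (big_nat_recr m.+1 0 (fun i => alpha m i * dbin i.+1 j)) //= alpha_top.
    have -> : \sum_(0 <= i < m.+1) alpha m i * dbin i.+1 j =
       \sum_(0 <= i < m.+1) (alpha m i * dbin i (j - 1) + 2 * (alpha m i * dbin i j)
                             + alpha m i * dbin i (j + 1)).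
      apply: eq_bigr => [[|i]] _; first by rewrite alpha0; ring.
      by rewrite dbinS //; ring.
    rewrite !big_split /= -mulr_sumr (IH (j - 1)).1 IHalpha (IH (j + 1)).1.
    rewrite (dbinS m.+2 (2 * j)) // (dbinS m.+1 (2 * j - 1)) // (dbinS m.+1 (2 * j)) //.
    rewrite (dbinS m.+1 (2 * j + 1)) //.
    have -> : 2 * j - 1 - 1 = 2 * (j - 1) by ring.
    have -> : 2 * j - 1 + 1 = 2 * j by ring.
    have -> : 2 * j + 1 - 1 = 2 * j by ring.
    have -> : 2 * j + 1 + 1 = 2 * (j + 1) by ring.
    ring.
Qed.

Lemma big_three_term_shift N (f : nat -> rat) (X : int -> rat) :
  f 0%N = 0 -> X 0 = 0 -> (forall i : nat, (N < i)%N -> X i%:Z = 0) ->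
  \sum_(0 <= l < N.+2) f l * (X (l%:Z - 1) + 2 * X l%:Z + X (l%:Z + 1)) =
  \sum_(0 <= l < N.+2) (f l.+1 + 2 * f l + f l.-1) * X l%:Z.
Proof.
move=> f0 X0 XN.
rewrite (eq_bigr (fun l => f l * X (l%:Z - 1) + 2 * (f l * X l%:Z) + f l * X (l%:Z + 1)));
  last by move=> l _; ring.
rewrite [RHS](eq_bigr (fun l => f l.+1 * X l%:Z + 2 * (f l * X l%:Z) + f l.-1 * X l%:Z));
  last by move=> l _; ring.
rewrite !big_split /=; congr (_ + _ + _).
- rewrite big_nat_recl // f0 mul0r add0r [RHS]big_nat_recr //= XN // mulr0 addr0.
  by apply: eq_bigr => i _; congr (_ * X _); lia.
- rewrite big_nat_recr // [RHS]big_nat_recl //= X0 mulr0 add0r.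
  rewrite (_ : N.+1%:Z + 1 = N.+2%:Z); last by lia.
  rewrite XN // mulr0 addr0.
  by apply: eq_bigr => i _; congr (_ * X _); lia.
Qed.

Lemma dbin_boundary m :
  dbin m.+1 0 = 0 /\ (forall i : nat, (m.+1 < i)%N -> dbin m.+1 i%:Z = 0).
Proof. by split=> [|i Hi]; [rewrite dbin0 | apply: dbin_gt; lia]. Qed.

Definition first_moment n := \sum_(0 <= l < n.+1) l%:R * dbin n l%:Z.

Definition cubic_weight (l : nat) : rat := (2 * l ^ 3 + l)%:R / 3.
Definition cubic_moment n := \sum_(0 <= l < n.+1) cubic_weight l * dbin n l%:Z.

Lemma cubic_weight0 : cubic_weight 0 = 0.
Proof. by rewrite /cubic_weight mul0r. Qed.

Lemma first_momentE m : first_moment m.+1 = 4 ^+ m.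
Proof.
elim: m => [|m IH].
  by rewrite /first_moment !big_nat_recr // big_geq // dbin1 dbin0.
have [X0 XN] := dbin_boundary m.
rewrite /first_moment; under eq_bigr => l _ do rewrite (dbinS m.+1 _ isT).
rewrite (big_three_term_shift m.+1 (fun l => l%:R) (dbin m.+1) (erefl _) X0 XN).
rewrite (eq_bigr (fun l => 4 * (l%:R * dbin m.+1 l%:Z))); last first.
  by move=> [|l] _ /=; rewrite ?X0 -?natr1; ring.
rewrite -mulr_sumr big_nat_recr //= XN // mulr0 addr0.
by rewrite -/(first_moment m.+1) IH exprS.
Qed.

Lemma cubic_momentE m : cubic_moment m.+1 = m.+1%:R * 4 ^+ m.
Proof.
elim: m => [|m IH].
  by rewrite /cubic_moment !big_nat_recr // big_geq // dbin1 dbin0.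
have [X0 XN] := dbin_boundary m.
rewrite /cubic_moment; under eq_bigr => l _ do rewrite (dbinS m.+1 _ isT).
rewrite (big_three_term_shift m.+1 cubic_weight (dbin m.+1) cubic_weight0 X0 XN).
rewrite (eq_bigr (fun l => 4 * (cubic_weight l * dbin m.+1 l%:Z) +
                           4 * (l%:R * dbin m.+1 l%:Z))); last first.
  move=> [|l] _ /=; first by rewrite X0; ring.
  by rewrite /cubic_weight !(natrD, natrM, natrX) -!natr1; field.
rewrite big_split -!mulr_sumr /= [X in 4 * X + _]big_nat_recr //=.
rewrite [X in _ + 4 * X]big_nat_recr //= (XN m.+2) // !mulr0 !addr0.
rewrite -/(first_moment m.+1) -/(cubic_moment m.+1) first_momentE IH exprS.
by rewrite -!natr1; ring.
Qed.

Definition fringe_closed r n :=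
  \sum_(1 <= l < n.+1) cubic_weight l * dbin n (2 ^ r * l)%:Z.

Lemma fringe_closed_widen r k N : (k <= N)%N ->
  fringe_closed r k = \sum_(1 <= l < N.+1) cubic_weight l * dbin k (2 ^ r * l)%:Z.
Proof.
move=> H; rewrite /fringe_closed (@big_cat_nat _ _ _ k.+1 1 N.+1) //=.
rewrite [X in _ = _ + X]big_nat_cond [X in _ = _ + X]big1 ?addr0 // => l.
move=> /andP [/andP [Hl _] _]; rewrite dbin_gt ?mulr0 //.
have : (l <= 2 ^ r * l)%N by rewrite leq_pmull // expn_gt0.
by move: (2 ^ r * l)%N => q; lia.
Qed.

Lemma fringe_closed0 n : fringe_closed 0 n = cubic_moment n.
Proof.
rewrite /fringe_closed /cubic_moment [RHS]big_nat_recl // cubic_weight0 mul0r add0r.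
by rewrite big_add1 /=; apply: eq_bigr => i _; rewrite expn0 mul1n.
Qed.

Lemma fringe_totalE r n : (0 < n)%N -> fringe_total r n = 4 ^+ r.+1 * fringe_closed r n.
Proof.
elim: r n => [|r IH] [|[|m]] // _.
- by rewrite fringe_total0 fringe_closed0 cubic_momentE exprS; ring.
- by rewrite fringe_total0 fringe_closed0 cubic_momentE exprS; ring.
- rewrite fringe_totalS_small // /fringe_closed big_nat1 dbin_gt ?mulr0 //.
  have : (2 <= 2 ^ r.+1 * 1)%N by rewrite muln1 expnS leq_pmulr // expn_gt0.
  by move: (2 ^ r.+1 * 1)%N => q; lia.
- rewrite fringe_totalSS.
  rewrite (eq_big_nat _ _ (F2 := fun k => 4 ^+ r.+1 * (alpha m.+1 k *
            \sum_(1 <= l < m.+3) cubic_weight l * dbin k (2 ^ r * l)%:Z))); last first.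
    move=> [|k] /andP [_ Hk]; first by rewrite alpha0; ring.
    by rewrite IH // (fringe_closed_widen r _ _ (ltnW Hk)); ring.
  rewrite -mulr_sumr mulrA -exprS; congr (_ * _).
  under eq_bigr => k _ do rewrite mulr_sumr.
  rewrite exchange_big /fringe_closed; apply: eq_bigr => l _.
  under eq_bigr => k _ do rewrite mulrCA.
  by rewrite -mulr_sumr (alpha_beta_dbin m.+1 _).1 expnS -mulnA PoszM.
Qed.

Theorem proposition6 (n r : nat) : (1 <= n)%N ->
  expected_fringe n r =
  (4 : rat) ^ ((r.+1)%:Z - n%:Z) *
  \sum_(1 <= l < n.+1)
     ((2 * l ^ 3 + l)%:R / 3 *
      (binz (2 * n - 1) (n%:Z - (2 ^ r * l)%:Z)
       - binz (2 * n - 1) (n%:Z - (2 ^ r * l)%:Z - 1))).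
Proof.
move=> n_gt0.
rewrite /expected_fringe (big_tuple_words n (fun s => (fringe_size r s)%:R)).
rewrite -/(fringe_total r n) (fringe_totalE r n n_gt0) -/(fringe_closed r n).
rewrite expfzDr // natrX -exprnN.
by rewrite mulrAC.
Qed.
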